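(* Let $G$ be an instance of the rank-maximal matchings problem (with last-resort posts added), let $M$ be a rank-maximal matching in $G$, and let $G_M$ be its switching graph. Then: (1) If $p$ is a post unmatched in $M$, then $p\in\mathcal{E}_1\cap\dots\cap\mathcal{E}_{r+1}$, and therefore $p$ is a sink in $G_M$. (2) A post $p$ belongs to a sink component of $G_M$ if and only if $p\in\mathcal{E}_{r+1}$; a post $p$ belongs to a non-sink component if and only if $p\in\mathcal{U}_{r+1}$. (3) Let $T$ be a directed path in $G_M$ from a post $p$ to some sink $q$. Then $w(T)=0$ if and only if $p\in\mathcal{E}_1\cap\dots\cap\mathcal{E}_{r+1}$.
   Context: An instance is a bipartite graph $G=(\mathcal{A}\cup\mathcal{P},E)$, $\mathcal{A}$ applicants, $\mathcal{P}$ posts, $E=E_1\cup\dots\cup E_r$ disjoint; $(a,p)\in E_i$ means $p$ is an $i$-th choice of $a$, $\mathrm{rank}(a,p)=i$ (ties allowed). Each applicant $a$ gets its own dummy last-resort post $\ell(a)$ with $(a,\ell(a))\in E_{r+1}$; the resulting instance is still called $G$. The signature of a matching is $(x_1,\dots,x_{r+1})$, $x_i$ the number of applicants matched along rank-$i$ edges; a matching is rank-maximal if its signature is lexicographically maximum. Even/odd/unreachable: for a bipartite graph and maximum matching $N$, a vertex is even (odd) if an even (odd) length $N$-alternating path leads to it from an $N$-unmatched vertex, unreachable otherwise; independent of $N$. Irving et al.'s algorithm: $G'_1=(\mathcal{A}\cup\mathcal{P},E_1)$, $M_1$ a maximum matching. For $i=1,\dots,r$: let $\mathcal{E}_i,\mathcal{O}_i,\mathcal{U}_i$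 be the even/odd/unreachable vertices of $G'_i$; delete all edges of rank $>i$ incident to $\mathcal{O}_i\cup\mathcal{U}_i$; delete from $G'_i$ the edges joining $\mathcal{O}_i$ to $\mathcal{O}_i\cup\mathcal{U}_i$; add the remaining edges of $E_{i+1}$ to get $G'_{i+1}$; let $M_{i+1}$ be a maximum matching of $G'_{i+1}$ augmenting $M_i$. With $\mathcal{E}_{r+1},\mathcal{O}_{r+1},\mathcal{U}_{r+1}$ the even/odd/unreachable vertices of $G'_{r+1}$, the reduced graph $G'$ is $G'_{r+1}$ minus the edges joining $\mathcal{O}_{r+1}$ to $\mathcal{O}_{r+1}\cup\mathcal{U}_{r+1}$ (independent of choices). Switching graph: for a rank-maximal $M$ (which matches all applicants), $G_M$ is the directed graph on $\mathcal{P}$ with an edge $(p_i,p_j)$ whenever some applicant $a$ has $(a,p_i)\in M$ and $(a,p_j)\in E(G')$, of weight $\mathrm{rank}(a,p_j)-\mathrm{rank}(a,p_i)$; $w(T)$ is the total weight of a path $T$. A sink is a post with no outgoing edge in $G_M$ lying in $\mathcal{E}_1\cap\dots\cap\mathcal{E}_{r+1}$. A sink component is a connected component of the underlying undirected graph of $G_M$ containing at least one sink; other components are non-sink components. *)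

From Stdlib Require Import Relations.
From mathcomp Require Import all_boot all_order all_algebra.
Set Implicit Arguments. Unset Strict Implicit. Unset Printing Implicit Defensive.
Import GRing.Theory Num.Theory.

Definition is_matching {A Q : finType} (F : A -> Q -> Prop) (N : {set A * Q}) : Prop :=
  (forall e, e \in N -> F e.1 e.2) /\
  (forall e1 e2, e1 \in N -> e2 \in N -> (e1.1 = e2.1 \/ e1.2 = e2.2) -> e1 = e2).

Definition is_max_matching {A Q : finType} (F : A -> Q -> Prop) (N : {set A * Q}) : Prop :=
  is_matching F N /\ forall N', is_matching F N' -> #|N'| <= #|N|.

Definition adj {A Q : finType} (F : A -> Q -> Prop) (u v : A + Q) : Prop :=
  match u, v with
  | inl a, inr q => F a q
  | inr q, inl a => F a q
  | _, _ => False
  end.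

Definition unmatched {A Q : finType} (N : {set A * Q}) (u : A + Q) : Prop :=
  match u with
  | inl a => forall q, (a, q) \notin N
  | inr q => forall a, (a, q) \notin N
  end.

Definition alt_path {A Q : finType} (F : A -> Q -> Prop) (N : {set A * Q})
    (u v : A + Q) (s : seq (A + Q)) : Prop :=
  [/\ unmatched N u, uniq (u :: s), last u s = v &
   forall i, i < size s ->
     adj F (nth u (u :: s) i) (nth u (u :: s) i.+1) /\
     (adj (fun a q => (a, q) \in N) (nth u (u :: s) i) (nth u (u :: s) i.+1) <-> odd i)].

(* even / odd / unreachable vertices (w.r.t. a maximum matching; the
   notion is independent of the chosen maximum matching) *)
Definition even_v {A Q : finType} (F : A -> Q -> Prop) (v : A + Q) : Prop :=
  exists N u s, is_max_matching F N /\ alt_path F N u v s /\ ~~ odd (size s).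

Definition odd_v {A Q : finType} (F : A -> Q -> Prop) (v : A + Q) : Prop :=
  exists N u s, is_max_matching F N /\ alt_path F N u v s /\ odd (size s).

Definition unreach_v {A Q : finType} (F : A -> Q -> Prop) (v : A + Q) : Prop :=
  ~ even_v F v /\ ~ odd_v F v.

(* Instances.  Applicants A, posts P, ranks 1..r given by rk : A -> P ->*)
(* nat, where rk a p = 0 means "no edge" and rk a p = i >= 1 means p is *)
(* an i-th choice of a.  Last-resort posts: the post type of the        *)
(* extended instance is P + A, with l(a) = inr a of rank r+1 for a.     *)

Definition rkx {A P : finType} (r : nat) (rk : A -> P -> nat) (a : A) (p : P + A) : nat :=
  match p with
  | inl q => rk a q
  | inr b => if a == b then r.+1 else 0
  end.

Definition Eall {A P : finType} (r : nat) (rk : A -> P -> nat) (a : A) (p : P + A) : Prop :=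
  0 < rkx r rk a p.

(* one iteration i of Irving et al.'s algorithm: from (G'_i, R) where R
   is the set of not-yet-deleted edges of higher rank, produce
   (G'_{i+1}, R'). *)
Definition step {A P : finType} (r : nat) (rk : A -> P -> nat)
    (F R : A -> P + A -> Prop) (i : nat) : (A -> P + A -> Prop) * (A -> P + A -> Prop) :=
  let OU v := odd_v F v \/ unreach_v F v in
  let R' := fun a p => R a p /\ ~ (OU (inl a) \/ OU (inr p)) in
  let F' := fun a p =>
      (F a p /\ ~ ((odd_v F (inl a) /\ OU (inr p)) \/ (odd_v F (inr p) /\ OU (inl a))))
      \/ (R' a p /\ rkx r rk a p = i.+1) in
  (F', R').

(* stage k = (G'_{k+1}, remaining higher-rank edges) *)
Fixpoint stage {A P : finType} (r : nat) (rk : A -> P -> nat) (k : nat)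
    : (A -> P + A -> Prop) * (A -> P + A -> Prop) :=
  match k with
  | 0 => (fun a p => rkx r rk a p = 1, fun a p => is_true (1 < rkx r rk a p))
  | k'.+1 => step r rk (stage r rk k').1 (stage r rk k').2 k'.+1
  end.

(* Gp r rk k  is the graph G'_{k+1} *)
Definition Gp {A P : finType} (r : nat) (rk : A -> P -> nat) (k : nat) : A -> P + A -> Prop :=
  (stage r rk k).1.

Definition Gred {A P : finType} (r : nat) (rk : A -> P -> nat) (a : A) (p : P + A) : Prop :=
  let F := Gp r rk r in
  let OU v := odd_v F v \/ unreach_v F v in
  F a p /\ ~ ((odd_v F (inl a) /\ OU (inr p)) \/ (odd_v F (inr p) /\ OU (inl a))).

(* p \in E_1 \cap ... \cap E_{r+1} *)
Definition in_all_even {A P : finType} (r : nat) (rk : A -> P -> nat) (p : P + A) : Prop :=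
  forall k, k <= r -> even_v (Gp r rk k) (inr p).

Definition signature {A P : finType} (r : nat) (rk : A -> P -> nat)
    (M : {set A * (P + A)}) (i : nat) : nat :=
  #|[set e in M | rkx r rk e.1 e.2 == i]|.

Definition lex_gt {A P : finType} (r : nat) (rk : A -> P -> nat) (N M : {set A * (P + A)}) : Prop :=
  exists i, [/\ 1 <= i <= r.+1,
    (forall j, 1 <= j < i -> signature r rk N j = signature r rk M j) &
    signature r rk M i < signature r rk N i].

Definition rank_maximal {A P : finType} (r : nat) (rk : A -> P -> nat) (M : {set A * (P + A)}) : Prop :=
  is_matching (Eall r rk) M /\
  forall N, is_matching (Eall r rk) N -> ~ lex_gt r rk N M.

Definition swe {A P : finType} (r : nat) (rk : A -> P -> nat) (M : {set A * (P + A)})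
    (p p' : P + A) : Prop :=
  p <> p' /\ exists a, (a, p) \in M /\ Gred r rk a p'.

(* weight of the edge (p, p'): rank(a,p') - rank(a,p), a = M-partner of p *)
Definition swe_weight {A P : finType} (r : nat) (rk : A -> P -> nat) (M : {set A * (P + A)})
    (p p' : P + A) : int :=
  (\sum_(a | (a, p) \in M) ((rkx r rk a p')%:Z - (rkx r rk a p)%:Z))%R.

Definition is_sink {A P : finType} (r : nat) (rk : A -> P -> nat) (M : {set A * (P + A)})
    (p : P + A) : Prop :=
  (forall p', ~ swe r rk M p p') /\ in_all_even r rk p.

Definition gm_connected {A P : finType} (r : nat) (rk : A -> P -> nat) (M : {set A * (P + A)})
    (p q : P + A) : Prop :=
  clos_refl_sym_trans (P + A) (swe r rk M) p q.

Definition in_sink_comp {A P : finType} (r : nat) (rk : A -> P -> nat) (M : {set A * (P + A)})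
    (p : P + A) : Prop :=
  exists q, is_sink r rk M q /\ gm_connected r rk M p q.

Definition in_nonsink_comp {A P : finType} (r : nat) (rk : A -> P -> nat) (M : {set A * (P + A)})
    (p : P + A) : Prop :=
  forall q, gm_connected r rk M p q -> ~ is_sink r rk M q.

Definition dpath {A P : finType} (r : nat) (rk : A -> P -> nat) (M : {set A * (P + A)})
    (p q : P + A) (s : seq (P + A)) : Prop :=
  [/\ uniq (p :: s), last p s = q &
   forall i, i < size s -> swe r rk M (nth p (p :: s) i) (nth p (p :: s) i.+1)].

Definition dpath_weight {A P : finType} (r : nat) (rk : A -> P -> nat) (M : {set A * (P + A)})
    (p : P + A) (s : seq (P + A)) : int :=
  (\sum_(i < size s) swe_weight r rk M (nth p (p :: s) i) (nth p (p :: s) i.+1))%R.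

(* By the invariant of Irving et al.'s algorithm, the edges of [M] of rank at most
   [k+1] form a maximum matching of [G'_{k+1}]; so at every stage the even vertices are
   those some maximum matching exposes, a post unmatched by [M] is even at every stage,
   and every applicant is matched by every maximum matching of [G'_{r+1}].  Evenness
   in [G'_{r+1}] is constant on the components of the switching graph.  If the
   component of an even post [p] had no post unmatched by [M], a maximum matching
   exposing [p] would map the [M]-partners of its posts injectively into the component
   minus [p].  Finally, for an edge [ap] of the reduced graph, the number of stages at
   which [p] is not even plus the number at which [a] is odd is [r + 1 - (rank(a,p) - 1)],
   so the weight of a switching path telescopes to the difference of the numbers of
   non-even stages of its ends, and that number is zero at a sink. *)

From mathcomp Require Import all_boot all_order all_algebra.
From mathcomp Require Import boolp zify.
From Stdlib Require Import Relations.
Set Implicit Arguments. Unset Strict Implicit. Unset Printing Implicit Defensive.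
Import GRing.Theory.

Section BipartiteMatchings.
Variables (A Q : finType).
Implicit Types (G : A -> Q -> Prop) (N : {set A * Q}) (x y z w u v : A + Q) (e f : A * Q).

Definition left_side x : bool := if x is inl _ then true else false.

Definition edge_of x y : option (A * Q) :=
  match x, y with
  | inl a, inr q | inr q, inl a => Some (a, q)
  | _, _ => None
  end.

Definition incident e x : bool := (x == inl e.1) || (x == inr e.2).

Definition mate N := adj (fun a q => (a, q) \in N).

Lemma adjE G x y : adj G x y <-> exists e, edge_of x y = Some e /\ G e.1 e.2.
Proof.
case: x => [a|q]; case: y => [b|q'] /=; split => //; try by case=> ? [].
- by move=> H; exists (a, q').
- by case=> e [[<-]].
- by move=> H; exists (b, q).
- by case=> e [[<-]].
Qed.

Lemma mateE N x y : mate N x y <-> exists e, edge_of x y = Some e /\ e \in N.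
Proof. by rewrite /mate adjE; split; case=> -[a q] [H1 H2]; exists (a, q). Qed.

Lemma adj_sym G x y : adj G x y -> adj G y x.
Proof. by case: x; case: y. Qed.

Lemma mate_sym N x y : mate N x y -> mate N y x.
Proof. exact: adj_sym. Qed.

Lemma adj_left_side G x y : adj G x y -> left_side x = ~~ left_side y.
Proof. by case: x; case: y. Qed.

Lemma adj_neq G x y : adj G x y -> x <> y.
Proof. by case: x; case: y => // ? ? ? ->. Qed.

Lemma edge_of_incident x y e : edge_of x y = Some e -> [/\ incident e x, incident e y & x != y].
Proof. by case: x => [a|q]; case: y => [b|q'] //= [<-]; rewrite /incident /= !eqxx ?orbT. Qed.

Lemma edge_of_ends x y e v : edge_of x y = Some e -> incident e v -> v = x \/ v = y.
Proof.
by case: x => [a|q]; case: y => [b|q'] //= [<-]; rewrite /incident /= => /orP[] /eqP ->; auto.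
Qed.

Lemma incident_two e v w : incident e v -> incident e w -> v <> w ->
  (v = inl e.1 /\ w = inr e.2) \/ (v = inr e.2 /\ w = inl e.1).
Proof. by rewrite /incident => /orP [] /eqP -> /orP [] /eqP ->; auto. Qed.

Lemma matchingP G N : is_matching G N <->
  (forall e, e \in N -> G e.1 e.2) /\
  (forall e1 e2 v, e1 \in N -> e2 \in N -> incident e1 v -> incident e2 v -> e1 = e2).
Proof.
split; case=> H1 H2; split => //.
- move=> e1 e2 v He1 He2; rewrite /incident.
  by move=> /orP[] /eqP -> /orP[] /eqP // [] H; apply: H2 => //; [left|right].
- move=> e1 e2 He1 He2 [] H.
  + by apply: (H2 _ _ (inl e1.1)) => //; rewrite /incident H eqxx.
  + by apply: (H2 _ _ (inr e1.2)) => //; rewrite /incident H eqxx orbT.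
Qed.

Lemma matching_fst_inj G N : is_matching G N -> {in N &, injective (fun e => e.1)}.
Proof.
move/matchingP => [_ HD] e e' He He' E.
by apply: (HD e e' (inl e.1)) => //; rewrite /incident ?E eqxx.
Qed.

Lemma matching_snd_inj G N : is_matching G N -> {in N &, injective (fun e => e.2)}.
Proof.
move/matchingP => [_ HD] e e' He He' E.
by apply: (HD e e' (inr e.2)) => //; rewrite /incident ?E eqxx ?orbT.
Qed.

Lemma sub_matching G G' N N' : is_matching G N' -> N \subset N' ->
  (forall e, e \in N -> G' e.1 e.2) -> is_matching G' N.
Proof. by move=> [_ H] /subsetP Hs HG; split => // e1 e2 H1 H2; apply: H; apply: Hs. Qed.

Lemma unmatchedE N x : unmatched N x <-> forall e, e \in N -> ~~ incident e x.
Proof.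
case: x => [a|q] /=; split.
- move=> H [b q] He; rewrite /incident /= ?orbF; apply/negP => /eqP [] E; subst b.
  by move: (H q); rewrite He.
- by move=> H q; apply/negP => He; move: (H _ He); rewrite /incident /= eqxx.
- move=> H [b q'] He; rewrite /incident /= ?orbF; apply/negP => /eqP [] E; subst q'.
  by move: (H b); rewrite He.
- by move=> H b; apply/negP => He; move: (H _ He); rewrite /incident /= eqxx ?orbT.
Qed.

Lemma unmatched_sub N N' x : N \subset N' -> unmatched N' x -> unmatched N x.
Proof.
by move=> /subsetP Hs /unmatchedE H; apply/unmatchedE => e He; apply: H; apply: Hs.
Qed.

Lemma matched_incident N x : ~ unmatched N x -> exists2 e, e \in N & incident e x.
Proof.
move=> H; apply: contrapT => H1; apply: H; apply/unmatchedE => e He.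
by apply/negP => Hi; apply: H1; exists e.
Qed.

Lemma unmatched_mate N x y : unmatched N x -> ~ mate N x y.
Proof.
move/unmatchedE => H /mateE [e [He1 He2]]; case: (edge_of_incident He1) => Hi _ _.
by move: (H _ He2); rewrite Hi.
Qed.

Lemma unmatchedP N x : unmatched N x <-> forall y, ~ mate N x y.
Proof.
split; first by move=> H y; apply: unmatched_mate.
case: x => [a|q] /= H.
- by move=> q; apply/negP => Hq; apply: (H (inr q)).
- by move=> a; apply/negP => Hq; apply: (H (inl a)).
Qed.

Lemma matched_mate N x : ~ unmatched N x -> exists y, mate N x y.
Proof.
by move=> H; apply: contrapT => H1; apply: H; apply/unmatchedP => y Hy; apply: H1; exists y.
Qed.

Lemma mate_adj G N x y : is_matching G N -> mate N x y -> adj G x y.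
Proof. by case=> H _; case: x => [a|q]; case: y => [b|q'] //= /H. Qed.

Lemma mate_uniq G N x y z : is_matching G N -> mate N x y -> mate N x z -> y = z.
Proof.
move/matchingP => [_ H] /mateE [e1 [E1 N1]] /mateE [e2 [E2 N2]].
case: (edge_of_incident E1) => I1 _ _; case: (edge_of_incident E2) => I2 _ _.
have ee := H _ _ _ N1 N2 I1 I2; subst e2.
move: E1 E2; clear I1 I2 N1 N2 H.
by case: x => [a|q]; case: y => [b|q'] //; case: z => [c|q''] //=; congruence.
Qed.

Lemma matching_add_edge G N x w e : is_matching G N -> unmatched N x -> unmatched N w ->
  edge_of w x = Some e -> G e.1 e.2 -> is_matching G (e |: N) /\ e \notin N.
Proof.
move=> HN /unmatchedE Hx /unmatchedE Hw E Ge.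
case: (edge_of_incident E) => Iw Ix _.
have ne : e \notin N by apply/negP => H; move: (Hw _ H); rewrite Iw.
move/matchingP: HN => [HG HD]; split => //; apply/matchingP; split.
- by move=> f; rewrite !inE => /orP[/eqP ->|/HG].
- move=> f1 f2 v; rewrite !inE => /orP[/eqP ->|f1N] /orP[/eqP ->|f2N] // i1 i2.
  + by case: (edge_of_ends E i1) => Ev; subst v;
      [move: (Hw _ f2N)|move: (Hx _ f2N)]; rewrite i2.
  + by case: (edge_of_ends E i2) => Ev; subst v;
      [move: (Hw _ f1N)|move: (Hx _ f1N)]; rewrite i1.
  + exact: (HD _ _ v).
Qed.

Lemma matching_augment G N x w : is_matching G N -> unmatched N x -> unmatched N w ->
  adj G w x -> exists N1, is_matching G N1 /\ #|N1| = #|N|.+1.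
Proof.
move=> HN Hx Hw /adjE [e [E Ge]]; have [HN1 ne] := matching_add_edge HN Hx Hw E Ge.
by exists (e |: N); rewrite cardsU1 ne.
Qed.

Lemma matching_swap G N x y w e1 e2 : is_matching G N ->
  edge_of x y = Some e1 -> e1 \in N -> unmatched N w -> edge_of w x = Some e2 -> G e2.1 e2.2 ->
  [/\ is_matching G (e2 |: (N :\ e1)), #|e2 |: (N :\ e1)| = #|N|,
    unmatched (e2 |: (N :\ e1)) y, mate (e2 |: (N :\ e1)) w x &
    forall p q, p <> x -> q <> x -> (mate (e2 |: (N :\ e1)) p q <-> mate N p q)].
Proof.
move=> HN E1 N1 Hw E2 G2; have Hw' := proj1 (unmatchedE _ _) Hw.
case: (edge_of_incident E1) => I1x I1y nxy; case: (edge_of_incident E2) => I2w I2x nwx.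
have n2 : e2 \notin N by apply/negP => H; move: (Hw' _ H); rewrite I2w.
move/matchingP: (HN) => [HG HD].
split.
- apply/matchingP; split.
  + by move=> e; rewrite !inE => /orP[/eqP ->|/andP[_ /HG]].
  + move=> f1 f2 v; rewrite !inE.
    move=> /orP[/eqP ->|/andP[nf1 f1N]] /orP[/eqP ->|/andP[nf2 f2N]] // i1 i2.
    * case: (edge_of_ends E2 i1) => Ev; subst v; first by move: (Hw' _ f2N); rewrite i2.
      by move/eqP: nf2; case; apply: (HD _ _ x).
    * case: (edge_of_ends E2 i2) => Ev; subst v; first by move: (Hw' _ f1N); rewrite i1.
      by move/eqP: nf1; case; apply: (HD _ _ x).
    * exact: (HD _ _ v).
- by rewrite cardsU1 !inE negb_and n2 orbT /= (cardsD1 e1 N) N1.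
- apply/unmatchedE => f; rewrite !inE => /orP[/eqP ->|/andP[nf fN]].
  + apply/negP => i; case: (edge_of_ends E2 i) => E; subst; last by move/eqP: nxy.
    by move: (Hw' _ N1); rewrite I1y.
  + by apply/negP => i; move/eqP: nf; apply; apply: (HD _ _ y).
- by apply/mateE; exists e2; rewrite !inE eqxx.
- move=> p q np nq; split => /mateE [e [Ee He]]; apply/mateE; exists e; split => //;
    case: (edge_of_incident Ee) => ip iq npq.
  + move: He; rewrite !inE => /orP[/eqP E|/andP[]//]; subst e.
    case: (edge_of_ends E2 ip) => Ep //; case: (edge_of_ends E2 iq) => Eq //.
    by subst; move/eqP: npq.
  + rewrite !inE He andbT; apply/orP; right; apply/eqP => E; subst e.
    case: (edge_of_ends E1 ip) => Ep //; case: (edge_of_ends E1 iq) => Eq //.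
    by subst; move/eqP: npq.
Qed.

End BipartiteMatchings.

Section AlternatingPaths.
Variables (A Q : finType) (G : A -> Q -> Prop).
Implicit Types (N : {set A * Q}) (x y z w u v : A + Q) (s : seq (A + Q)).

Fixpoint alternating N x (b : bool) s : Prop :=
  if s is y :: s' then [/\ adj G x y, mate N x y <-> b & alternating N y (~~ b) s']
  else True.

Lemma alternating_nth N x b s : alternating N x b s <->
  forall i, i < size s -> adj G (nth x (x :: s) i) (nth x (x :: s) i.+1) /\
     (mate N (nth x (x :: s) i) (nth x (x :: s) i.+1) <-> b (+) odd i).
Proof.
elim: s x b => [|y s IH] x b /=; first by split.
have nthE i : i < size s -> nth x (y :: s) i = nth y (y :: s) i /\ nth x s i = nth y s i.
  by move=> Hi; rewrite !(set_nth_default y x) //= ltnW.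
split.
- case=> H1 H2 /IH H3 [|i] /= Hi; first by rewrite addbF.
  case: (nthE i Hi) => -> ->; case: (H3 i Hi) => /= H4 H5.
  by split => //; rewrite addbN -addNb.
- move=> H; case: (H 0 erefl) => H1; rewrite addbF => H2; split => //.
  apply/IH => i Hi; case: (H i.+1 Hi) => /=; case: (nthE i Hi) => -> -> H3 H4.
  by split => //; rewrite addNb -addbN.
Qed.

Lemma alt_pathE N u v s : alt_path G N u v s <->
  [/\ unmatched N u, uniq (u :: s), last u s = v & alternating N u false s].
Proof.
split; case=> H1 H2 H3 H4; split => //.
- by apply/alternating_nth => i Hi; rewrite addFb; apply: H4.
- by move/alternating_nth: H4 => H4 i Hi; rewrite -(addFb (odd i)); apply: H4.
Qed.

Lemma alternating_cat N x b s1 s2 : alternating N x b (s1 ++ s2) <->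
  alternating N x b s1 /\ alternating N (last x s1) (b (+) odd (size s1)) s2.
Proof.
elim: s1 x b => [|y s1 IH] x b /=; first by rewrite addbF; split => // [[]].
split.
- by case=> H1 H2 /IH [H3 H4]; split => //; rewrite addbN -addNb.
- by case=> [[H1 H2 H3] H4]; split => //; apply/IH; split => //; rewrite addbN -addNb in H4.
Qed.

Lemma alternating_left_side N x b s : alternating N x b s ->
  left_side (last x s) = left_side x (+) odd (size s).
Proof.
elim: s x b => [|y s IH] x b /=; first by rewrite addbF.
case=> H1 _ H3; rewrite (IH _ _ H3) (adj_left_side H1).
by case: (left_side y); case: (odd (size s)).
Qed.

Lemma alternating_split N x b s1 z s2 : alternating N x b (s1 ++ z :: s2) ->
  [/\ alternating N x b (rcons s1 z), adj G (last x s1) z,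
      mate N (last x s1) z <-> b (+) odd (size s1) &
      alternating N z (~~ (b (+) odd (size s1))) s2].
Proof.
move/alternating_cat => [H1 /= [H2 H3 H4]]; split => //.
by rewrite -cats1; apply/alternating_cat; split => //=.
Qed.

Lemma alternating_congr N N1 x b s :
  (forall p q, p \in x :: s -> q \in x :: s -> (mate N1 p q <-> mate N p q)) ->
  alternating N x b s -> alternating N1 x b s.
Proof.
elim: s x b => [|y s IH] x b //= H [H1 H2 H3]; split => //.
- by rewrite H // ?mem_head // inE mem_head orbT.
- by apply: IH => // p q Hp Hq; apply: H; rewrite inE ?Hp ?Hq orbT.
Qed.

Lemma alternating_flip N u s : is_matching G N -> unmatched N u ->
  alternating N u false s -> uniq (u :: s) ->
  if odd (size s) then unmatched N (last u s) -> exists N', is_matching G N' /\ #|N'| = #|N|.+1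
  else exists N', [/\ is_matching G N', #|N'| = #|N| & unmatched N' (last u s)].
Proof.
elim: {s}(size s).+1 {-2}s (ltnSn (size s)) N u => // n IH.
case=> [|y [|v s]] /= Hs N u HN Hu Hal Hun; try by exists N.
  by move=> Hy; case: Hal => H1 _ _; apply: (matching_augment HN Hy Hu H1).
case: Hal => H1 _ [_ /iffRL /(_ isT) Hm H5].
case/mateE: (Hm) => e1 [E1 N1]; case/adjE: H1 => e2 [E2 G2].
have [HN1 C1 U1 M1 Eq1] := matching_swap HN E1 N1 Hu E2 G2.
set N1' := e2 |: (N :\ e1) in HN1 C1 U1 M1 Eq1.
move: Hun; rewrite !inE !negb_or => /and3P [/and3P [nuy nuv nus] /andP [nyv nys] Hun].
have ny : forall p, p \in v :: s -> p <> y.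
  by move=> p + E; subst p; rewrite inE (negbTE nyv) (negbTE nys).
have Hal' : alternating N1' v false s.
  by apply: alternating_congr H5 => p q Hp Hq; apply: Eq1; apply: ny.
have := IH s (ltnW (ltnSE Hs)) N1' v HN1 U1 Hal' Hun.
rewrite negbK; case: (odd (size s)) => [H Hl|[N' [HN' C' U']]]; last by exists N'; rewrite C'.
have Hl' : last v s \in v :: s by apply: mem_last.
have [N' [HN' C']] : exists N', is_matching G N' /\ #|N'| = #|N1'|.+1.
  apply: H; apply/unmatchedP => q Hq; case: (eqVneq q y) => [E|/eqP nqy].
  + subst q; have E := mate_uniq HN1 (mate_sym Hq) (mate_sym M1).
    by move: Hl'; rewrite E inE (negbTE nuv) (negbTE nus).
  + by move/Eq1: Hq => /(_ (ny _ Hl') nqy); apply: unmatched_mate Hl.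
by exists N'; rewrite C' C1.
Qed.

Definition exposable v := exists N, is_max_matching G N /\ unmatched N v.

Lemma even_exposableP v : even_v G v <-> exposable v.
Proof.
split.
- case=> N [u [s [[HN Hmax] [/alt_pathE [Hu Hun Hl Hal] Hev]]]].
  have := alternating_flip HN Hu Hal Hun; rewrite (negbTE Hev) Hl.
  case=> N' [HN' C' U']; exists N'; do 2?split => //.
  by move=> N'' H; rewrite C'; apply: Hmax.
- by case=> N [HN Hv]; exists N, v, [::].
Qed.

Lemma max_matching_no_augmenting_path N u s : is_max_matching G N ->
  alt_path G N u (last u s) s -> odd (size s) -> ~ unmatched N (last u s).
Proof.
case=> HN Hmax /alt_pathE [Hu Hun _ Hal] Ho Hl.
have := alternating_flip HN Hu Hal Hun; rewrite Ho => /(_ Hl) [N' [HN' C']].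
by have := Hmax _ HN'; rewrite C' ltnn.
Qed.

Lemma alternating_even_matched N u s z : is_matching G N -> alternating N u false s ->
  ~~ odd (size s) -> z \in s -> exists2 z', mate N z z' & z' \in u :: s.
Proof.
move=> HN Hal Hev Hz; case/splitPr: Hz Hal Hev => s1 s2 Hal Hev.
case/alternating_split: Hal => _ H1 H2 H3.
case Ho: (odd (size s1)).
- exists (last u s1); first by apply: mate_sym; apply/H2.
  by rewrite -cat_cons mem_cat mem_last.
- move: Hev H3; rewrite size_cat /= Ho /=; case: s2 => [|z' s2] /=.
    by rewrite addn1 /= Ho.
  move=> _ [_ H4 _]; exists z'; first by apply/H4.
  by rewrite inE mem_cat !inE eqxx !orbT.
Qed.

Lemma alt_path_prefix N u v s z : alt_path G N u v s -> z \in u :: s ->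
  exists s', alt_path G N u z s' /\ left_side z = left_side u (+) odd (size s').
Proof.
move=> /alt_pathE [Hu Hun Hl Hal]; rewrite inE => /orP [/eqP ->|Hz].
  by exists [::]; rewrite addbF; split => //; apply/alt_pathE.
case/splitPr: Hz Hun Hal Hl => s1 s2 Hun Hal _.
case/alternating_split: (Hal) => H1 _ _ _.
exists (rcons s1 z); split.
- apply/alt_pathE; split => //; last by rewrite last_rcons.
  move: Hun; rewrite -cat_cons cat_uniq => /and3P [H4 H5 H6].
  rewrite -rcons_cons rcons_uniq H4 andbT.
  by apply/negP => Hz; move: H5; rewrite /= Hz.
- by rewrite -{1}(last_rcons u s1 z); apply: alternating_left_side H1.
Qed.

End AlternatingPaths.

Section EvenOddVertices.
Variables (A Q : finType) (G : A -> Q -> Prop).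
Implicit Types (N : {set A * Q}) (x y z w u v : A + Q) (s : seq (A + Q)).

Definition even_for N v := exists u s, alt_path G N u v s /\ ~~ odd (size s).

Lemma even_for_unmatched N v : unmatched N v -> even_for N v.
Proof. by move=> Hv; exists v, [::]; split => //; apply/alt_pathE. Qed.

Lemma even_for_step N w x y : is_matching G N -> even_for N w -> adj G w x -> mate N x y ->
  even_for N y.
Proof.
move=> HN [u [s [Hp Hev]]] Hwx Hxy.
have /alt_pathE [Hu Hun Hl Hal] := Hp.
have side_u : left_side w = left_side u.
  by rewrite -Hl (alternating_left_side Hal) (negbTE Hev) addbF.
have side_y : left_side y = left_side w.
  by rewrite (adj_left_side Hwx) (adj_left_side (mate_adj HN Hxy)) negbK.
have [Hyin|Hyin] := boolP (y \in u :: s).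
  case: (alt_path_prefix Hp Hyin) => s' [Hp' Hs']; exists u, s'; split => //.
  by move: Hs'; rewrite side_y side_u; case: (odd (size s')) => //; case: (left_side u).
have Hxn : x \notin u :: s.
  rewrite inE; apply/negP => /orP [/eqP E|Hxs]; first by subst u; apply: unmatched_mate Hu Hxy.
  case: (alternating_even_matched HN Hal Hev Hxs) => z' Hz' Hz'in.
  by move: Hyin; rewrite -(mate_uniq HN Hz' Hxy) Hz'in.
exists u, (s ++ [:: x; y]); split; last by rewrite size_cat /= addn2 /= negbK.
apply/alt_pathE; split => //; last 2 first.
- by rewrite last_cat.
- apply/alternating_cat; split => //; rewrite Hl (negbTE Hev) /=; split => //.
  + split => // Hm; move: Hyin.
    by rewrite -(mate_uniq HN (mate_sym Hm) Hxy) -Hl mem_last.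
  + by split => //; apply: mate_adj HN Hxy.
rewrite -cat_cons cat_uniq Hun /= (negbTE Hxn) (negbTE Hyin) /= inE andbT.
by apply/negP => /eqP E; subst y; case: (adj_neq (mate_adj HN Hxy)).
Qed.

(* Induction on [#|N :\: N2|], where [N2] is a maximum matching exposing [v]:
   swapping along the [N]-edge at [v] brings [N2] closer to [N]. *)
Lemma exposable_even_for v : exposable G v -> forall N, is_max_matching G N -> even_for N v.
Proof.
move=> [N2 [HN2m Hv2]] N [HN _].
elim: {N2}#|N :\: N2|.+1 {-2}N2 v (ltnSn #|N :\: N2|) HN2m Hv2 => // n IH N2 v Hn [HN2 Hmax2] Hv2.
have [Hv|/matched_mate [x1 Hx1]] := EM (unmatched N v); first exact: even_for_unmatched.
have Ha1 : adj G v x1 by apply: mate_adj HN Hx1.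
have [Hu1|/matched_mate [x2 Hx2]] := EM (unmatched N2 x1).
  have [N' [HN' C']] := matching_augment HN2 Hu1 Hv2 Ha1.
  by have := Hmax2 _ HN'; rewrite C' ltnn.
case/mateE: (Hx2) => e1 [E1 e1N2]; case/mateE: (Hx1) => e2 [E2 e2N].
have G2 : G e2.1 e2.2 by case/matchingP: HN => + _; apply.
have [HN1 C1 U1 _ _] := matching_swap HN2 E1 e1N2 Hv2 E2 G2.
have e1N : e1 \notin N.
  apply/negP => He1; have Hm : mate N x1 x2 by apply/mateE; exists e1.
  have E := mate_uniq HN Hm (mate_sym Hx1); subst x2.
  exact: unmatched_mate Hv2 (mate_sym Hx2).
have e2N2 : e2 \notin N2.
  by apply/negP => H; case: (edge_of_incident E2) => Iv _ _; move: Hv2 => /unmatchedE /(_ _ H); rewrite Iv.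
have Hsub : N :\: (e2 |: (N2 :\ e1)) \proper N :\: N2.
  apply/properP; split.
  - apply/subsetP => f; rewrite !inE negb_or => /andP [/andP [_ H] fN]; rewrite fN andbT.
    by case/nandP: H => [/negbNE /eqP E|->] //; subst f; rewrite fN in e1N.
  - by exists e2; rewrite !inE ?eqxx // e2N e2N2.
have Hev2 : even_for N x2.
  apply: (IH (e2 |: (N2 :\ e1))) U1.
  - by rewrite -ltnS; apply: leq_trans Hn; apply: proper_card.
  - by split => // N' H; rewrite C1; apply: Hmax2.
exact: even_for_step HN Hev2 (adj_sym (mate_adj HN2 Hx2)) (mate_sym Hx1).
Qed.

Lemma exposable_not_adj x y : adj G x y -> exposable G x -> exposable G y -> False.
Proof.
move=> Hxy Hx [N [HNm Hy]]; have [HN _] := HNm.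
have [u [s [Hp Hev]]] := exposable_even_for Hx HNm.
have /alt_pathE [Hu Hun Hl Hal] := Hp.
have [Hyin|Hyin] := boolP (y \in u :: s).
  move: Hyin; rewrite inE => /orP [/eqP E|Hys].
  - subst u; move: (alternating_left_side Hal).
    by rewrite Hl (negbTE Hev) addbF (adj_left_side Hxy); case: (left_side y).
  - by case: (alternating_even_matched HN Hal Hev Hys) => z' /(unmatched_mate Hy).
apply: (max_matching_no_augmenting_path (u := u) (s := rcons s y) HNm); last 2 first.
- by rewrite size_rcons /= Hev.
- by rewrite last_rcons.
rewrite last_rcons; apply/alt_pathE; split => //.
- by rewrite -rcons_cons rcons_uniq Hyin Hun.
- by rewrite last_rcons.
- rewrite -cats1; apply/alternating_cat; split => //; rewrite Hl (negbTE Hev) /=.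
  by split => //; split => // Hm; case: (unmatched_mate Hy (mate_sym Hm)).
Qed.

Lemma adj_exposable_odd x w : adj G x w -> exposable G w -> odd_v G x.
Proof.
move=> Hxw [N [HNm Hw]]; exists N, w, [:: x]; split => //; split => //.
apply/alt_pathE; split => //=.
- by rewrite inE andbT; apply/negP => /eqP E; subst w; case: (adj_neq Hxw).
- by split => //; [apply: adj_sym|split => // Hm; case: (unmatched_mate Hw Hm)].
Qed.

Lemma odd_adj_exposable x : odd_v G x -> exists2 w, exposable G w & adj G w x.
Proof.
case=> N [u [s [HNm [Hp Ho]]]].
have /alt_pathE [Hu Hun Hl Hal] := Hp.
case/lastP: s Hp Ho Hun Hl Hal => [|s0 y] Hp Ho Hun Hl Hal //.
rewrite last_rcons in Hl; subst y.
move: Hal; rewrite -cats1 => /alternating_cat [H1 /= [H2 _ _]].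
exists (last u s0) => //.
have Hin : last u s0 \in u :: rcons s0 x by rewrite -cats1 -cat_cons mem_cat mem_last.
case: (alt_path_prefix Hp Hin) => s' [Hp' Hs'].
apply/even_exposableP; exists N, u, s'; split => //; split => //.
move: Hs' Ho; rewrite (alternating_left_side H1) size_rcons /=.
by case: (odd (size s0)); case: (odd (size s')); case: (left_side u).
Qed.

Lemma odd_not_exposable x : odd_v G x -> ~ exposable G x.
Proof. by case/odd_adj_exposable => w Hw Hwx; apply: exposable_not_adj Hwx Hw. Qed.

Lemma odd_not_even x : odd_v G x -> ~ even_v G x.
Proof. by move/odd_not_exposable => H /even_exposableP. Qed.

Lemma mate_odd_exposable N x y : is_max_matching G N -> mate N x y -> odd_v G x ->
  exposable G y.
Proof.
move=> HNm Hxy Hx; have [HN _] := HNm.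
case: (odd_adj_exposable Hx) => w Hw Hwx.
have [Hm|Hm] := EM (mate N w x); first by rewrite (mate_uniq HN Hxy (mate_sym Hm)).
case: (even_for_step HN (exposable_even_for Hw HNm) Hwx Hxy) => u [s [Hp Hev]].
by apply/even_exposableP; exists N, u, s.
Qed.

Definition gallai_cover v : Prop := if v is inl a then ~ even_v G v else odd_v G v.

Lemma gallai_cover_not_even v : gallai_cover v -> ~ even_v G v.
Proof. by case: v => [a|q] //= /odd_not_even. Qed.

Lemma matching_card_le_gallai_cover N : is_matching G N ->
  #|N| <= #|[set v | `[< gallai_cover v >]]|.
Proof.
move=> HN; move/matchingP: (HN) => [HG HD].
pose f (e : A * Q) : A + Q := if `[< even_v G (inl e.1) >] then inr e.2 else inl e.1.
have finj : {in N &, injective f}.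
  move=> e e' He He'; rewrite /f; case: asboolP => H1; case: asboolP => H2 // [] E.
  + by apply: (HD e e' (inr e.2)) => //; rewrite /incident ?E eqxx ?orbT.
  + by apply: (HD e e' (inl e.1)) => //; rewrite /incident ?E eqxx ?orbT.
rewrite -(card_in_imset finj); apply: subset_leq_card; apply/subsetP => v /imsetP [e He ->].
rewrite inE; apply/asboolP; rewrite /f; case: asboolP => H //=.
by apply: (adj_exposable_odd (w := inl e.1)); [apply: HG|apply/even_exposableP].
Qed.

End EvenOddVertices.

Section MatchingExchange.
Variables (A Q : finType) (G : A -> Q -> Prop).
Implicit Types (N : {set A * Q}) (v w : A + Q) (e f : A * Q).

Definition touching e f : bool := (f.1 == e.1) || (f.2 == e.2).

Lemma touchingP e f : reflect (exists w, incident f w && incident e w) (touching e f).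
Proof.
apply: (iffP orP).
- by case=> /eqP E; [exists (inl e.1)|exists (inr e.2)]; rewrite /incident E eqxx ?orbT.
- case=> w /andP []; rewrite /incident.
  by move=> /orP [] /eqP -> /orP [] /eqP // [] ->; rewrite eqxx; [left|right].
Qed.

(* Only the edge at the other endpoint of [e] has to leave. *)
Lemma matching_insert_edge N e v : is_matching G N -> G e.1 e.2 -> incident e v ->
  unmatched N v -> exists N', [/\ is_matching G N', e \in N', #|N| <= #|N'| &
    forall f, f \in N -> f \notin N' -> touching e f].
Proof.
move=> HN Ge iev /unmatchedE Hv; move/matchingP: (HN) => [HG HD].
exists (e |: [set f in N | ~~ touching e f]).
set S := [set f in N | touching e f].
have S1 : #|S| <= 1.
  apply/card_le1_eqP => f f'; rewrite !inE => /andP [fN /touchingP [v1 /andP [i1 j1]]].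
  move=> /andP [fN' /touchingP [v2 /andP [i2 j2]]].
  have [E|n12] := eqVneq v1 v2; first by subst v2; apply: (HD _ _ v1).
  have [E1|n1] := eqVneq v1 v; first by subst v1; move: (Hv _ fN); rewrite i1.
  have [E2|n2] := eqVneq v2 v; first by subst v2; move: (Hv _ fN'); rewrite i2.
  move: j1 j2 iev n12 n1 n2; rewrite /incident; case: (e) => a q /=.
  by do 3 (case/orP => /eqP ->); rewrite ?eqxx.
have eN : e \notin N.
  by apply/negP => H; move: (Hv _ H); rewrite iev.
split.
- apply/matchingP; split; first by move=> f; rewrite !inE => /orP [/eqP ->|/andP [/HG]].
  move=> f1 f2 w; rewrite !inE.
  move=> /orP [/eqP ->|/andP [f1N nS1]] /orP [/eqP ->|/andP [f2N nS2]] //.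
  + by move=> i1 i2; move: nS2 => /touchingP []; exists w; rewrite i1 i2.
  + by move=> i1 i2; move: nS1 => /touchingP []; exists w; rewrite i1 i2.
  + exact: HD.
- by rewrite !inE eqxx.
- have -> : [set f in N | ~~ touching e f] = N :\: S.
    by apply/setP => f; rewrite !inE; case: (f \in N); rewrite ?andbT ?andbF.
  have SN : S \subset N by apply/subsetP => f; rewrite inE => /andP [].
  rewrite cardsU1 !inE negb_and eN orbT /= cardsDS //.
  have := subset_leq_card SN; move: S1; case: #|S| => [|[|]] //= _; rewrite ?subn0 ?subn1 //.
  by case: #|N|.
- by move=> f fN; rewrite !inE fN negb_or => /andP [_ /negbNE].
Qed.

(* Insert the edges of [N1] at the vertices [N2] misses, one at a time. *)
Lemma matching_exchange N1 N2 : is_matching G N1 -> is_matching G N2 -> #|N1| < #|N2| ->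
  exists N3, [/\ is_matching G N3, #|N1| < #|N3| &
    forall v, ~ unmatched N1 v -> ~ unmatched N3 v].
Proof.
move=> HN1; move/matchingP: (HN1) => [HG1 HD1].
elim: {N2}#|N1 :\: N2|.+1 {-2}N2 (ltnSn #|N1 :\: N2|) => // n IH N2 Hn HN2 Hlt.
have [Hall|] := EM (forall v, ~ unmatched N1 v -> ~ unmatched N2 v); first by exists N2.
move=> /existsNP [v /not_implyP [/matched_incident [e eN1 iev] /contrapT Hv2]].
have eN2 : e \notin N2.
  by apply/negP => H; move: ((proj1 (unmatchedE _ _) Hv2) _ H); rewrite iev.
have [N2' [HN2' eN2' C2' Htouch]] := matching_insert_edge HN2 (HG1 _ eN1) iev Hv2.
apply: (IH N2') HN2' (leq_trans Hlt C2').
rewrite -ltnS; apply: leq_trans Hn; apply: proper_card; apply/properP; split.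
- apply/subsetP => f; rewrite !inE => /andP [fN2' fN1]; rewrite fN1 andbT.
  apply/negP => fN2; move/negP: fN2'; apply; apply/negPn/negP => /(Htouch _ fN2).
  case/touchingP => w /andP [i1 i2]; have E := HD1 _ _ _ fN1 eN1 i1 i2.
  by subst f; rewrite fN2 in eN2.
- by exists e; rewrite !inE ?eN2' // eN1 eN2.
Qed.


Lemma card_le_matched_partners N1 N2 (S T : {set Q}) : is_matching G N1 -> is_matching G N2 ->
  (forall q, q \in S -> exists a, (a, q) \in N1 /\ exists2 q', (a, q') \in N2 & q' \in T) ->
  #|S| <= #|T|.
Proof.
move=> HN1 HN2 HST.
pose f q := odflt q [pick q' in T | [exists a, ((a, q) \in N1) && ((a, q') \in N2)]].
have fP q : q \in S -> f q \in T /\ exists a, (a, q) \in N1 /\ (a, f q) \in N2.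
  move=> /HST [a [Ha [q' Hq' q'T]]]; rewrite /f; case: pickP => [t /andP [tT /existsP [b]]|].
  - by case/andP => Hb Hb'; split => //; exists b.
  - by move/(_ q'); rewrite q'T /= => /negbT /existsPn /(_ a); rewrite Ha Hq'.
have finj : {in S &, injective f}.
  move=> q1 q2 /fP [_ [a1 [M1 N1a]]] /fP [_ [a2 [M2 N2a]]] E; rewrite E in N1a.
  have Ea : a1 = a2 by case: (matching_snd_inj HN2 N1a N2a erefl).
  by subst a2; case: (matching_fst_inj HN1 M1 M2 erefl).
rewrite -(card_in_imset finj); apply: subset_leq_card; apply/subsetP => t /imsetP [q Hq ->].
by case: (fP q Hq).
Qed.

End MatchingExchange.

Section IrvingStages.
Variables (A P : finType) (r : nat) (rk : A -> P -> nat).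

Local Notation G' k := (Gp r rk k).
Local Notation remaining k := (stage r rk k).2.
Local Notation rkx := (rkx r rk).

Definition odd_unreach k v := odd_v (G' k) v \/ unreach_v (G' k) v.

Definition deleted k a p :=
  (odd_v (G' k) (inl a) /\ odd_unreach k (inr p)) \/
  (odd_v (G' k) (inr p) /\ odd_unreach k (inl a)).

Lemma Gp_succ k a p :
  G' k.+1 a p <-> (G' k a p /\ ~ deleted k a p) \/ (remaining k.+1 a p /\ rkx a p = k.+2).
Proof. by []. Qed.

Lemma remaining_succ k a p :
  remaining k.+1 a p <-> remaining k a p /\ ~ (odd_unreach k (inl a) \/ odd_unreach k (inr p)).
Proof. by []. Qed.

Lemma Gred_Gp a p : Gred r rk a p <-> G' r a p /\ ~ deleted r a p.
Proof. by []. Qed.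

Lemma odd_unreachNE k v : ~ odd_unreach k v <-> even_v (G' k) v.
Proof.
split => [H|Hev [Ho|[Hne _]] //]; last exact: odd_not_even Ho Hev.
by apply: contrapT => Hne; apply: H; have [Ho|Hno] := EM (odd_v (G' k) v); [left|right].
Qed.

Lemma odd_unreachE k v : odd_unreach k v <-> ~ even_v (G' k) v.
Proof. by rewrite -odd_unreachNE; split => [H /(_ H)|/contrapT]. Qed.

Lemma max_matching_not_deleted k N a p : is_max_matching (G' k) N -> (a, p) \in N ->
  ~ deleted k a p.
Proof.
move=> HNm Hap; have Hm : mate N (inl a) (inr p) by [].
by case=> [[Ho]|[Ho]]; apply/odd_unreachNE/even_exposableP;
  [apply: mate_odd_exposable HNm Hm Ho|apply: mate_odd_exposable HNm (mate_sym Hm) Ho].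
Qed.

Lemma Gp_rank k a p : G' k a p -> 0 < rkx a p <= k.+1.
Proof.
elim: k => [/= -> //|k IH /Gp_succ [[/IH /andP [-> H] _]|[_ ->]]]; last by rewrite leqnn.
exact: leqW.
Qed.

Lemma remaining_antimono k m a p : k <= m -> remaining m a p -> remaining k a p.
Proof.
by move=> /subnK <-; elim: (m - k) => [|d IH] //; rewrite addSn => /remaining_succ [/IH].
Qed.

Lemma remaining_even k a p : remaining k.+1 a p ->
  even_v (G' k) (inl a) /\ even_v (G' k) (inr p).
Proof. by case=> _ H; split; apply/odd_unreachNE => H1; apply: H; [left|right]. Qed.

Lemma Gp_down k m a p : k < m -> G' m a p ->
  (rkx a p <= k.+1 -> G' k a p /\ ~ deleted k a p) /\
  (k.+1 < rkx a p -> even_v (G' k) (inl a) /\ even_v (G' k) (inr p)).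
Proof.
move=> /subnK <-; elim: (m - k.+1) => [|d IH].
- rewrite add0n => /Gp_succ [[H1 H2]|[H1 H2]]; split => // H.
  + by have /andP [_ H3] := Gp_rank H1; move: (leq_ltn_trans H3 H); rewrite ltnn.
  + by move: H; rewrite H2 ltnn.
  + exact: remaining_even.
- rewrite addSn => /Gp_succ [[H1 H2]|[H1 H2]]; first exact: IH.
  split => H; first by move: H; rewrite H2; lia.
  by apply: remaining_even; apply: (remaining_antimono _ H1); lia.
Qed.

Lemma Gred_down k a p : k <= r -> Gred r rk a p ->
  (rkx a p <= k.+1 -> G' k a p /\ ~ deleted k a p) /\
  (k.+1 < rkx a p -> even_v (G' k) (inl a) /\ even_v (G' k) (inr p)).
Proof.
rewrite leq_eqVlt => /orP [/eqP ->|Hk] /Gred_Gp [H1 H2]; last exact: Gp_down Hk H1.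
split => // H; have /andP [_ H3] := Gp_rank H1.
by move: (leq_ltn_trans H3 H); rewrite ltnn.
Qed.

End IrvingStages.

Section LowRankEdges.
Variables (A P : finType) (r : nat) (rk : A -> P -> nat).
Implicit Types (X N : {set A * (P + A)}) (v : A + (P + A)).

Local Notation G' k := (Gp r rk k).
Local Notation rkx := (rkx r rk).

Definition low_edges j X := [set e in X | rkx e.1 e.2 <= j].

Lemma low_edges_sub j X : low_edges j X \subset X.
Proof. by apply/subsetP => e; rewrite inE => /andP []. Qed.

Lemma low_edges_mono i j X : i <= j -> low_edges i X \subset low_edges j X.
Proof. by move=> H; apply/subsetP => e; rewrite !inE => /andP [-> /= H2]; lia. Qed.

Lemma card_low_edgesS j X : #|low_edges j.+1 X| = #|low_edges j X| + signature r rk X j.+1.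
Proof.
rewrite /signature /low_edges -(cardsID [set e | rkx e.1 e.2 <= j] [set e in X | rkx e.1 e.2 <= j.+1]).
congr (_ + _); apply: eq_card => e; rewrite !inE.
all: by case: (e \in X); rewrite /= ?andbF //; apply/idP/idP; lia.
Qed.

Lemma low_edges_id j X : (forall e, e \in X -> rkx e.1 e.2 <= j) -> low_edges j X = X.
Proof. by move=> H; apply/setP => e; rewrite !inE; case: (boolP (e \in X)) => // /H ->. Qed.

Lemma low_edges0 X : is_matching (Eall r rk) X -> low_edges 0 X = set0.
Proof.
case=> H _; apply/setP => e; rewrite !inE; case: (boolP (e \in X)) => //= /H.
by rewrite /Eall; case: (rkx e.1 e.2).
Qed.

Lemma Gp_matching_Eall k X : is_matching (G' k) X -> is_matching (Eall r rk) X.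
Proof.
move=> H; apply: (sub_matching H (subxx X)) => e eX; case: H => [H _].
by case/andP: (Gp_rank (H e eX)).
Qed.

Lemma Gp_matching_low_edges k X : is_matching (G' k) X -> low_edges k.+1 X = X.
Proof. by case=> H _; apply: low_edges_id => e /H /Gp_rank /andP []. Qed.

(* The stage-[j] cover vertices are odd or unreachable there, so at every later stage
   their edges have rank at most [j+1] and no such edge joins two of them. *)
Lemma gallai_cover_le_low_edges j k N : j <= k -> is_matching (G' k.+1) N ->
  (forall v, gallai_cover (G' j) v -> ~ unmatched N v) ->
  #|[set v | `[< gallai_cover (G' j) v >]]| <= #|low_edges j.+1 N|.
Proof.
move=> Hjk HN Hcov; have Hjk' : j < k.+1 by rewrite ltnS.
move/matchingP: (HN) => [HGN HDN].
set X := [set v | _].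
have XP v : v \in X -> gallai_cover (G' j) v by rewrite inE => /asboolP.
have cover_OU v : v \in X -> odd_unreach r rk j v.
  by move/XP/gallai_cover_not_even/odd_unreachE.
have [->|[v0 Hv0]] := set_0Vmem X; first by rewrite cards0.
have [e0 _ _] := matched_incident (Hcov v0 (XP v0 Hv0)).
pose g v := odflt e0 [pick e in N | incident e v].
have gP v : v \in X -> g v \in N /\ incident (g v) v.
  rewrite /g; case: pickP => [e /andP [eN ie] //|H /XP /Hcov].
  by case/matched_incident => e eN ie; move: (H e); rewrite eN ie.
have g_low v : v \in X -> rkx (g v).1 (g v).2 <= j.+1.
  move=> Hv; case: (gP v Hv) => gN gi; rewrite leqNgt; apply/negP => Hlt.
  have [_ /(_ Hlt) [Ha Hp]] := Gp_down Hjk' (HGN _ gN).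
  have := cover_OU v Hv; case/orP: gi => /eqP ->.
  + by apply/odd_unreachNE.
  + by apply/odd_unreachNE.
have ginj : {in X &, injective g}.
  move=> v w Hv Hw E; apply: contrapT => nvw.
  case: (gP v Hv) => _ gv; case: (gP w Hw) => gN gw; rewrite E in gv.
  have [/(_ (g_low w Hw)) [_] + _] := Gp_down Hjk' (HGN _ gN); apply; right.
  have := XP _ Hv; have := XP _ Hw; move: (g w) gv gw => e gv gw.
  by case: (incident_two gv gw nvw) => -[-> ->] /= H1 H2; split => //; apply/odd_unreachE.
rewrite -(card_in_imset ginj); apply: subset_leq_card; apply/subsetP => e /imsetP [v Hv ->].
by rewrite inE; case: (gP v Hv) => -> _ /=; apply: g_low.
Qed.

End LowRankEdges.

Section RankMaximalMatching.
Variables (A P : finType) (r : nat) (rk : A -> P -> nat).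
Hypothesis Hrk : forall a p, rk a p <= r.
Variable M : {set A * (P + A)}.
Hypothesis HM : rank_maximal r rk M.
Implicit Types (N : {set A * (P + A)}) (v : A + (P + A)).

Local Notation G' k := (Gp r rk k).
Local Notation rkx := (rkx r rk).
Local Notation low := (low_edges r rk).

Lemma rkx_le a p : rkx a p <= r.+1.
Proof. by case: p => [q|b] /=; [apply: leqW|case: eqP]. Qed.

Lemma rank_maximal_matching : is_matching (Eall r rk) M.
Proof. by case: HM. Qed.

Lemma rank_maximal_rank e : e \in M -> 0 < rkx e.1 e.2 <= r.+1.
Proof. by case: rank_maximal_matching => + _ => /[apply]; rewrite /Eall => ->; apply: rkx_le. Qed.

Lemma low_edges_rank_maximal : low r.+1 M = M.
Proof. by apply: low_edges_id => e /rank_maximal_rank /andP []. Qed.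

Lemma rank_maximal_low_card N i : is_matching (Eall r rk) N -> 0 < i <= r.+1 ->
  (forall j, j < i -> #|low j N| = #|low j M|) -> #|low i N| <= #|low i M|.
Proof.
move=> HN Hi Heq; rewrite leqNgt; apply/negP => Hlt.
case: HM => _ /(_ N HN); apply; exists i; split => //.
- case=> // j /andP [_ Hj].
  have := card_low_edgesS r rk j N; have := card_low_edgesS r rk j M.
  by rewrite !Heq ?(ltnW Hj) //; lia.
- by case: i Hi Heq Hlt => // i _ Heq; rewrite !card_low_edgesS Heq //; lia.
Qed.

(* Otherwise the last-resort edge of an unmatched applicant could be added. *)
Lemma rank_maximal_matches_applicant a : ~ unmatched M (inl a).
Proof.
move=> Ha; have HMm := rank_maximal_matching.
have Hl : unmatched M (inr (inr a)).
  move=> b; apply/negP => Hb; have := proj1 HMm _ Hb; rewrite /Eall /=.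
  by case: eqP => // Eb _; subst b; move: (Ha (inr a)); rewrite Hb.
have Ea : Eall r rk a (inr a) by rewrite /Eall /= eqxx.
have [HN ne] := matching_add_edge HMm Hl Ha (erefl (Some (a, inr a))) Ea.
have low_new j : j < r.+1 -> #|low j ((a, inr a) |: M)| = #|low j M|.
  move=> Hj; apply: eq_card => e; rewrite !inE.
  by case: eqP => [-> /=|//]; rewrite eqxx; lia.
have := rank_maximal_low_card (i := r.+1) HN (leqnn _) low_new.
rewrite low_edges_rank_maximal low_edges_id ?cardsU1 ?ne ?ltnn //.
by move=> e; rewrite !inE => /orP [/eqP -> /=|/rank_maximal_rank /andP []]; rewrite ?eqxx.
Qed.

Lemma low_edges_rank_maximal_unmatched e j : e \in M -> j < rkx e.1 e.2 ->
  unmatched (low j M) (inl e.1) /\ unmatched (low j M) (inr e.2).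
Proof.
move=> eM Hlt; have /matchingP [_ HD] := rank_maximal_matching.
have ends v : incident e v -> unmatched (low j M) v.
  move=> iv; apply/unmatchedE => f; rewrite inE => /andP [fM fle]; apply/negP => Hi.
  have E := HD f e v fM eM Hi iv; subst f.
  by move: (leq_trans Hlt fle); rewrite ltnn.
by split; apply: ends; rewrite /incident eqxx ?orbT.
Qed.

Lemma low_edges_rank_maximal_max0 : is_max_matching (G' 0) (low 1 M).
Proof.
have HM0 : is_matching (G' 0) (low 1 M).
  apply: sub_matching rank_maximal_matching (low_edges_sub _ _ _ _) _ => e.
  rewrite inE => /andP [/rank_maximal_rank /andP [H0 _] H].
  by rewrite /Gp /=; apply/eqP; rewrite eqn_leq H H0.
split => // N HN; rewrite -(Gp_matching_low_edges HN).
apply: rank_maximal_low_card (Gp_matching_Eall HN) _ _ => // j.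
rewrite ltnS leqn0 => /eqP ->.
by rewrite (low_edges0 (Gp_matching_Eall HN)) (low_edges0 rank_maximal_matching).
Qed.

Section InvariantStep.
Variable k : nat.
Hypothesis Hkr : k < r.
Hypothesis IH : forall j, j <= k -> is_max_matching (G' j) (low j.+1 M).

(* An [M]-edge of rank [k+2] has both ends exposed by the maximum matchings of
   the earlier stages, so it is never deleted before it is added. *)
Lemma low_edges_rank_maximal_in_Gp : is_matching (G' k.+1) (low k.+2 M).
Proof.
apply: sub_matching rank_maximal_matching (low_edges_sub _ _ _ _) _ => -[a p].
rewrite inE => /andP [eM Hle] /=.
have [Hk|Hk] := leqP (rkx a p) k.+1.
  have [[HG _] Hmax] := IH (leqnn k).
  apply/Gp_succ; left; split; first by apply: (HG (a, p)); rewrite inE eM.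
  by apply: max_matching_not_deleted (IH (leqnn k)) _; rewrite inE eM.
have E : rkx a p = k.+2 by apply/eqP; rewrite eqn_leq Hle Hk.
apply/Gp_succ; right; split => //.
suff : forall m, m <= k.+1 -> (stage r rk m).2 a p by apply.
elim => [|m IHm] Hm; first by rewrite /= E.
apply/remaining_succ; split; first by apply: IHm; apply: ltnW.
have Hlt : m.+1 < rkx a p by rewrite E ltnS.
have [U1 U2] := low_edges_rank_maximal_unmatched eM Hlt.
by case=> /odd_unreachE; apply; apply/even_exposableP; exists (low m.+1 M); split => //; apply: IH.
Qed.

Lemma low_edges_card_eq j N : j <= k -> is_matching (G' k.+1) N ->
  (forall v, ~ unmatched (low j.+1 M) v -> ~ unmatched N v) ->
  #|low j.+1 N| = #|low j.+1 M|.
Proof.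
move=> Hjk HN Hcov; have [HMj Hmaxj] := IH Hjk.
apply/eqP; rewrite eqn_leq; apply/andP; split.
- apply: Hmaxj; apply: (sub_matching HN (low_edges_sub _ _ _ _)) => e.
  rewrite inE => /andP [eN He]; case: HN => [HG _].
  have Hjk' : j < k.+1 by rewrite ltnS.
  by case: (Gp_down Hjk' (HG _ eN)) => /(_ He) [].
- apply: leq_trans (matching_card_le_gallai_cover HMj) _.
  apply: gallai_cover_le_low_edges Hjk HN _ => v /gallai_cover_not_even Hv.
  by apply: Hcov => Hu; apply: Hv; apply/even_exposableP; exists (low j.+1 M).
Qed.

Lemma low_edges_rank_maximal_maxS : is_max_matching (G' k.+1) (low k.+2 M).
Proof.
have HMk := low_edges_rank_maximal_in_Gp.
split => // N HN; rewrite leqNgt; apply/negP => Hlt.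
have [N' [HN' Hlt' Hcov]] := matching_exchange HMk HN Hlt.
suff : #|low k.+2 N'| <= #|low k.+2 M| by rewrite (Gp_matching_low_edges HN') leqNgt Hlt'.
apply: rank_maximal_low_card (Gp_matching_Eall HN') _ _ => //.
case=> [_|j Hj].
  by rewrite (low_edges0 (Gp_matching_Eall HN')) (low_edges0 rank_maximal_matching).
apply: low_edges_card_eq HN' _; first by rewrite -ltnS.
move=> v Hv; apply: Hcov => Hu; apply: Hv.
by apply: unmatched_sub Hu; apply: low_edges_mono; apply: ltnW.
Qed.

End InvariantStep.

Lemma low_edges_rank_maximal_max k : k <= r -> is_max_matching (G' k) (low k.+1 M).
Proof.
elim/ltn_ind: k => -[_ _|k IHk Hk]; first exact: low_edges_rank_maximal_max0.
by apply: low_edges_rank_maximal_maxS => // j Hj; apply: IHk; lia.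
Qed.

Lemma rank_maximal_max_matching : is_max_matching (G' r) M.
Proof. by have := low_edges_rank_maximal_max (leqnn r); rewrite low_edges_rank_maximal. Qed.

End RankMaximalMatching.

Section SwitchingGraph.
Variables (A P : finType) (r : nat) (rk : A -> P -> nat).
Hypothesis Hrk : forall a p, rk a p <= r.
Variable M : {set A * (P + A)}.
Hypothesis HM : rank_maximal r rk M.
Implicit Types (N : {set A * (P + A)}) (p q x y : P + A).

Local Notation G' k := (Gp r rk k).
Local Notation rkx := (rkx r rk).
Local Notation max_M := (rank_maximal_max_matching Hrk HM).

Lemma rank_maximal_Gp a p : (a, p) \in M -> G' r a p.
Proof. by case: max_M => -[+ _] _ => /[apply]. Qed.

Lemma rank_maximal_Gred a p : (a, p) \in M -> Gred r rk a p.
Proof.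
by move=> H; apply/Gred_Gp; split; [apply: rank_maximal_Gp|apply: max_matching_not_deleted max_M H].
Qed.

Lemma max_matching_matches_applicant N a : is_max_matching (G' r) N -> ~ unmatched N (inl a).
Proof.
move=> [HN Hmax] Ha; have := Hmax _ (proj1 max_M).
have card_M : #|M| = #|A|.
  rewrite -(card_in_imset (matching_fst_inj (proj1 max_M))) -cardsT.
  congr #|pred_of_set _|; apply/setP => b; rewrite inE.
  case: (matched_incident (rank_maximal_matches_applicant Hrk HM (a := b))) => e eM ie.
  by apply/imsetP; exists e => //; move: ie; rewrite /incident /= ?orbF => /eqP [] ->.
have : [set e.1 | e in N] \subset [set~ a].
  apply/subsetP => b /imsetP [e eN ->]; rewrite !inE; apply/eqP => E.
  by move: ((proj1 (unmatchedE _ _) Ha) e eN); rewrite /incident E eqxx.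
move/subset_leq_card; rewrite cardsC1 (card_in_imset (matching_fst_inj HN)) card_M.
have : 0 < #|A| by apply/card_gt0P; exists a.
lia.
Qed.


Lemma unmatched_post_sink p : (forall a, (a, p) \notin M) ->
  in_all_even r rk p /\ is_sink r rk M p.
Proof.
move=> Hp; suff Hall : in_all_even r rk p.
  by split => //; split => // p' [_ [a [H _]]]; move: (Hp a); rewrite H.
move=> k Hk; apply/even_exposableP; exists (low_edges r rk k.+1 M).
split; first exact: low_edges_rank_maximal_max.
by apply: (unmatched_sub (low_edges_sub _ _ _ _)).
Qed.

Lemma switching_edge_even x y : swe r rk M x y -> (even_v (G' r) (inr x) <-> even_v (G' r) (inr y)).
Proof.
case=> _ [a [Hax /Gred_Gp [Hay Hdel]]]; split => /even_exposableP Hev.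
- have Ho := adj_exposable_odd (x := inl a) (w := inr x) (rank_maximal_Gp Hax) Hev.
  by apply/odd_unreachNE => HOU; apply: Hdel; left.
- have Ho := adj_exposable_odd (x := inl a) (w := inr y) Hay Hev.
  by apply/even_exposableP; apply: (mate_odd_exposable max_M (x := inl a)) Ho.
Qed.

Lemma connected_even x y : gm_connected r rk M x y ->
  (even_v (G' r) (inr x) <-> even_v (G' r) (inr y)).
Proof.
elim=> [u v /switching_edge_even //|u|u v _ [H1 H2]|u v w _ [H1 H2] _ [H3 H4]]; split; auto.
Qed.

Lemma max_matching_switch N a x y : is_max_matching (G' r) N -> (a, x) \in M -> (a, y) \in N ->
  even_v (G' r) (inr x) -> x = y \/ swe r rk M x y.
Proof.
move=> HNm Hax Hay /even_exposableP Hx.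
have Ho := adj_exposable_odd (x := inl a) (w := inr x) (rank_maximal_Gp Hax) Hx.
have /even_exposableP Hy := mate_odd_exposable HNm (Hay : mate N (inl a) (inr y)) Ho.
have [<-|nxy] := eqVneq x y; [left|right] => //; split; first exact/eqP.
exists a; split => //; apply/Gred_Gp; split; first by case: HNm => -[HG _] _; apply: (HG (a, y)).
by case=> [[_ /odd_unreachE]|[/odd_not_even]].
Qed.

Lemma even_sink_component p : even_v (G' r) (inr p) -> in_sink_comp r rk M p.
Proof.
move=> Hp; apply: contrapT => Hns.
set S := [set x | `[< gm_connected r rk M p x >]].
have SP x : x \in S -> gm_connected r rk M p x by rewrite inE => /asboolP.
have pS : p \in S by rewrite inE; apply/asboolP; apply: rst_refl.
have [N [HNm HNp]] := proj1 (even_exposableP _ _) Hp.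
have : #|S| <= #|S :\ p|.
  apply: (card_le_matched_partners (proj1 max_M) (proj1 HNm)) => x xS.
  have [Hx|] := EM (unmatched M (inr x)).
    by case: Hns; exists x; split; [case: (unmatched_post_sink Hx)|apply: SP].
  case/matched_incident => -[a x'] aM; rewrite /incident /= => /eqP [Ex]; subst x'.
  exists a; split => //.
  case: (matched_incident (max_matching_matches_applicant (a := a) HNm)) => -[b y] ayN.
  rewrite /incident /= orbF => /eqP [Eb]; subst b; exists y => //.
  have Hxe : even_v (G' r) (inr x) by apply/(connected_even (SP x xS)).
  rewrite !inE; apply/andP; split.
  - by apply/eqP => E; subst y; move: (HNp a); rewrite ayN.
  - apply/asboolP; case: (max_matching_switch HNm aM ayN Hxe) => [<-|Hs]; first exact: SP.
    by apply: rst_trans (SP x xS) (rst_step _ _ _ _ Hs).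
by rewrite (cardsD1 p S) pS; lia.
Qed.

Lemma sink_componentE p : in_sink_comp r rk M p <-> even_v (G' r) (inr p).
Proof.
split; last exact: even_sink_component.
by case=> q [[_ Hq] Hc]; apply/(connected_even Hc); apply: Hq.
Qed.

Lemma post_not_odd p : ~ odd_v (G' r) (inr p).
Proof.
case/odd_adj_exposable => -[a|q] [N [HNm Ha]] // _.
exact: max_matching_matches_applicant HNm Ha.
Qed.

Lemma nonsink_componentE p : in_nonsink_comp r rk M p <-> unreach_v (G' r) (inr p).
Proof.
split.
- move=> H; split; last exact: post_not_odd.
  by case/sink_componentE => q [Hq Hc]; apply: H Hc Hq.
- by case=> Hne _ q Hc Hq; apply: Hne; apply/sink_componentE; exists q.
Qed.


Definition potential x : nat := \sum_(k < r.+1) ~~ `[< even_v (G' k) (inr x) >].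

Definition odd_stages a : nat :=
  \sum_(k < r.+1) (~~ `[< even_v (G' k) (inl a) >] && `[< odd_v (G' k) (inl a) >]).

Lemma potential_eq0 x : potential x = 0 <-> in_all_even r rk x.
Proof.
rewrite /potential; split.
- move/eqP; rewrite sum_nat_eq0 => /forallP H k Hk.
  by move: (H (Ordinal (n := r.+1) (m := k) Hk)) => /=; case: asboolP.
- move=> H; apply/eqP; rewrite sum_nat_eq0; apply/forallP => i; apply/implyP => _.
  by have := H i (ltnSE (ltn_ord i)); case: asboolP.
Qed.

Lemma Gred_stage_count k a z : k <= r -> Gred r rk a z ->
  (~~ `[< even_v (G' k) (inr z) >]) + (~~ `[< even_v (G' k) (inl a) >] && `[< odd_v (G' k) (inl a) >])
  = (rkx a z <= k.+1).
Proof.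
move=> Hk Hg; have [low high] := Gred_down Hk Hg.
case: (asboolP (even_v (G' k) (inl a))) => Hea /=.
  rewrite addn0; case: (leqP (rkx a z) k.+1) => Hr; last by have [_ Hez] := high Hr; case: asboolP.
  have [HG _] := low Hr; case: asboolP => // /even_exposableP Hez.
  by have /even_exposableP Hea' := Hea; case: (exposable_not_adj (x := inl a) (y := inr z) HG Hea' Hez).
have Hr : rkx a z <= k.+1 by rewrite leqNgt; apply/negP => /high [].
rewrite Hr; have [HG Hdel] := low Hr.
case: (asboolP (odd_v (G' k) (inl a))) => Hoa /=.
- case: asboolP => // Hez; exfalso; apply: Hdel; left; split => //.
  exact/odd_unreachE.
- case: asboolP => // /even_exposableP Hez; exfalso; apply: Hoa.
  exact: (adj_exposable_odd (x := inl a) (w := inr z) HG).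
Qed.

Lemma sum_leq_succ n i : \sum_(k < n) (i <= k.+1) = n - i.-1.
Proof.
elim: n => [|n IH]; first by rewrite big_ord0.
by rewrite big_ord_recr /= IH; case: leqP => H /=; lia.
Qed.

Lemma Gred_potential a z : Gred r rk a z -> potential z + odd_stages a = r.+1 - (rkx a z).-1.
Proof.
move=> Hg; rewrite /potential /odd_stages -big_split /= -sum_leq_succ.
by apply: eq_bigr => k _; apply: Gred_stage_count => //; rewrite -ltnS.
Qed.

Lemma sumr_telescope_ord (V : zmodType) n (g : nat -> V) :
  (\sum_(i < n) (g i - g i.+1))%R = (g 0 - g n)%R.
Proof.
elim: n => [|n IH]; first by rewrite big_ord0 subrr.
by rewrite big_ord_recr /= IH addrA subrK.
Qed.

(* [odd_stages a] cancels between the [M]-edge [ax] and the reduced-graph edge [ay]. *)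
Lemma swe_weight_potential x y : swe r rk M x y ->
  swe_weight r rk M x y = ((potential x)%:Z - (potential y)%:Z)%R.
Proof.
case=> nxy [a [Hax Hay]].
have /matchingP [_ HD] := proj1 max_M.
rewrite /swe_weight (big_pred1 a) /=; last first.
  move=> b /=; apply/idP/eqP => [Hb|->] //.
  by have := HD _ _ (inr x) Hb Hax; rewrite /incident /= eqxx ?orbT => /(_ erefl erefl) [].
have := Gred_potential (rank_maximal_Gred Hax); have := Gred_potential Hay.
have := Gp_rank (rank_maximal_Gp Hax); have := Gp_rank (proj1 (proj1 (Gred_Gp _ _ _ _) Hay)).
by move: (rkx a x) (rkx a y) (potential x) (potential y) (odd_stages a) => u v cx cy c; lia.
Qed.

Lemma dpath_weight_potential p q s : dpath r rk M p q s ->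
  dpath_weight r rk M p s = ((potential p)%:Z - (potential q)%:Z)%R.
Proof.
case=> _ Hl Hsw; rewrite /dpath_weight.
pose g i : int := Posz (potential (nth p (p :: s) i)).
rewrite (eq_bigr (fun i : 'I_(size s) => g i - g i.+1)%R); last first.
  by move=> i _; rewrite swe_weight_potential //; apply: Hsw.
by rewrite sumr_telescope_ord /g /= -Hl; have := nth_last p (p :: s); rewrite /= => ->.
Qed.

Lemma dpath_weight_eq0 p q s : dpath r rk M p q s -> is_sink r rk M q ->
  dpath_weight r rk M p s = 0%R <-> in_all_even r rk p.
Proof.
move=> Hd [_ /potential_eq0 Hq]; rewrite (dpath_weight_potential Hd) Hq subr0 -potential_eq0.
by split => [[]|->].
Qed.

End SwitchingGraph.

Theorem lemma4 (A P : finType) (r : nat) (rk : A -> P -> nat)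
  (Hrk : forall a p, rk a p <= r)
  (M : {set A * (P + A)}) (HM : rank_maximal r rk M) :
  (forall p : P + A, (forall a, (a, p) \notin M) ->
       in_all_even r rk p /\ is_sink r rk M p) /\
  (forall p : P + A, in_sink_comp r rk M p <-> even_v (Gp r rk r) (inr p)) /\
  (forall p : P + A, in_nonsink_comp r rk M p <-> unreach_v (Gp r rk r) (inr p)) /\
  (forall (p q : P + A) (s : seq (P + A)), dpath r rk M p q s -> is_sink r rk M q ->
       (dpath_weight r rk M p s = 0%R <-> in_all_even r rk p)).
Proof.
split; first by move=> p Hp; apply: (unmatched_post_sink Hrk HM Hp).
split; first exact: (sink_componentE Hrk HM).
split; first exact: (nonsink_componentE Hrk HM).
by move=> p q s; apply: (dpath_weight_eq0 Hrk HM).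
Qed.
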